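(* For $A=\mathbb{F}_8$ with calculus as in the context, and for each $\beta\in\{y^2,1+y^2,1+y\}$, among the twelve QLCs of the metric $g=\beta g_0$ exactly five are flat (hence have $\mathrm{Ricci}=0$ for every lift), and among the seven non-flat QLCs there is exactly one $\nabla$ for which some lift $i$ yields $\mathrm{Ricci}+S\,g=0$.
   Context: Algebra F: $A=\mathbb{F}_2[y]/(y^3+y^2+1)\cong\mathbb{F}_8$ with $x=y^2$. $\Omega^1$ is free as a left module on $\omega^1=\mathrm{d}x$, $\omega^2=\mathrm{d}y$, with $\omega^1x=(1+x)\omega^1+\omega^2$, $\omega^1y=\omega^1+x\omega^2$, $\omega^2x=(1+y)\omega^1$, $\omega^2y=\omega^1+y\omega^2$. $\Omega^2=A\,\mathrm{Vol}$ free, $\mathrm{Vol}$ central, $\omega^1\wedge\omega^1=y\,\mathrm{Vol}$, $\omega^1\wedge\omega^2=\omega^2\wedge\omega^1=\mathrm{Vol}$, $\omega^2\wedge\omega^2=(1+y)\mathrm{Vol}$, $\mathrm{d}\omega^i=0$. $g_0=y^2\,\omega^1\otimes\omega^1+\omega^1\otimes\omega^2+\omega^2\otimes\omega^1+(1+y)\,\omega^2\otimes\omega^2$. For an invertible metric $g$, $(\ ,\ ):\Omega^1\otimes_A\Omega^1\to A$ is the bimodule map with $((\eta,\ )\otimes\mathrm{id})g=\eta=(\mathrm{id}\otimes(\ ,\eta))g$. A QLC for $g$ is a bimodule connection ($\nabla(a\omega)=a\nabla\omega+\mathrm{d}a\otimes\omega$, $\nabla(\omega a)=(\nabla\omega)a+\sigma(\omega\otimes\mathrm{d}a)$,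 $\sigma$ a bimodule map) that is torsion free ($\wedge\nabla=\mathrm{d}$) and metric compatible ($(\nabla\otimes\mathrm{id})g+(\sigma\otimes\mathrm{id})(\mathrm{id}\otimes\nabla)g=0$). Curvature $R_\nabla=(\mathrm{d}\otimes\mathrm{id}-\mathrm{id}\wedge\nabla)\nabla:\Omega^1\to\Omega^2\otimes_A\Omega^1$; flat means $R_\nabla=0$. A lift is a bimodule map $i:\Omega^2\to\Omega^1\otimes_A\Omega^1$ with $\wedge\circ i=\mathrm{id}$; the lifts are exactly $i_\gamma(\mathrm{Vol})=(1+y^2)\omega^1\otimes\omega^1+y\,\omega^1\otimes\omega^2+\omega^2\otimes\omega^1+(1+y)\omega^2\otimes\omega^2+\gamma g_0$, $\gamma\in A$. Given a lift, $\mathrm{Ricci}=((\ ,\ )\otimes\mathrm{id})(\mathrm{id}\otimes i\otimes\mathrm{id})(\mathrm{id}\otimes R_\nabla)g$ and $S=(\ ,\ )(\mathrm{Ricci})\in A$. *)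

From HB Require Import structures.
From mathcomp Require Import all_boot all_order all_algebra.
Set Implicit Arguments. Unset Strict Implicit. Unset Printing Implicit Defensive.
Import GRing.Theory.
Local Open Scope ring_scope.

(* mkF8 c0 c1 c2 represents c0 + c1 y + c2 y^2. *)
Record F8 := mkF8 { f0 : bool; f1 : bool; f2 : bool }.

Definition F8_to (a : F8) : bool * bool * bool := (f0 a, f1 a, f2 a).
Definition F8_of (t : bool * bool * bool) : F8 := mkF8 t.1.1 t.1.2 t.2.
Lemma F8_toK : cancel F8_to F8_of. Proof. by case. Qed.
HB.instance Definition _ := Finite.copy F8 (can_type F8_toK).

Definition F8zero := mkF8 false false false.
Definition F8one := mkF8 true false false.
Definition F8add (a b : F8) := mkF8 (f0 a (+) f0 b) (f1 a (+) f1 b) (f2 a (+) f2 b).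
Definition F8opp (a : F8) := a.
(* product of polynomials, reduced with y^3 = 1 + y^2, y^4 = 1 + y + y^2 *)
Definition F8mul (a b : F8) :=
  let p0 := f0 a && f0 b in
  let p1 := (f0 a && f1 b) (+) (f1 a && f0 b) in
  let p2 := (f0 a && f2 b) (+) (f1 a && f1 b) (+) (f2 a && f0 b) in
  let p3 := (f1 a && f2 b) (+) (f2 a && f1 b) in
  let p4 := f2 a && f2 b in
  mkF8 (p0 (+) p3 (+) p4) (p1 (+) p4) (p2 (+) p3 (+) p4).

Lemma F8addA : associative F8add.
Proof. by do 3![case=> [[] [] []]]. Qed.
Lemma F8addC : commutative F8add.
Proof. by do 2![case=> [[] [] []]]. Qed.
Lemma F8add0 : left_id F8zero F8add.
Proof. by case=> [[] [] []]. Qed.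
Lemma F8addN : left_inverse F8zero F8opp F8add.
Proof. by case=> [[] [] []]. Qed.
HB.instance Definition _ := GRing.isZmodule.Build F8 F8addA F8addC F8add0 F8addN.

Lemma F8mulA : associative F8mul.
Proof. by do 3![case=> [[] [] []]]. Qed.
Lemma F8mulC : commutative F8mul.
Proof. by do 2![case=> [[] [] []]]. Qed.
Lemma F8mul1 : left_id F8one F8mul.
Proof. by case=> [[] [] []]. Qed.
Lemma F8mulDl : left_distributive F8mul F8add.
Proof. by do 3![case=> [[] [] []]]. Qed.
Lemma F8one_neq0 : F8one != F8zero. Proof. by []. Qed.
HB.instance Definition _ :=
  GRing.Zmodule_isComNzRing.Build F8 F8mulA F8mulC F8mul1 F8mulDl F8one_neq0.

Definition yA : F8 := mkF8 false true false.
Definition xA : F8 := yA * yA.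

Definition bF (b : bool) : F8 := if b then 1 else 0.

(* An element v : 'rV_2 stands for v_0 omega^1 + v_1 omega^2
   (index 0 <-> omega^1 = dx, index 1 <-> omega^2 = dy). *)
Definition om (i : 'I_2) : 'rV[F8]_2 := delta_mx 0 i.
Definition i0 : 'I_2 := ord0.
Definition i1 : 'I_2 := ord_max.

(* omega^i . y  and  omega^i . x  (rows i) *)
Definition Ry : 'M[F8]_2 :=
  \matrix_(i, j) if i == i0 then (if j == i0 then 1 else xA)
                            else (if j == i0 then 1 else yA).
Definition Rx : 'M[F8]_2 :=
  \matrix_(i, j) if i == i0 then (if j == i0 then 1 + xA else 1)
                            else (if j == i0 then 1 + yA else 0).
(* right action of a = c0 + c1 y + c2 x on the basis (row i = omega^i . a);
   right multiplication is additive and F_2-scalars are central. *)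
Definition Rmat (a : F8) : 'M[F8]_2 :=
  bF (f0 a) *: 1%:M + bF (f1 a) *: Ry + bF (f2 a) *: Rx.
Definition ract (v : 'rV[F8]_2) (a : F8) : 'rV[F8]_2 := v *m Rmat a.

Definition dA (a : F8) : 'rV[F8]_2 := bF (f2 a) *: om i0 + bF (f1 a) *: om i1.

(* T : 'M_2 stands for sum_{ij} T i j omega^i (x) omega^j *)
Definition tens (u v : 'rV[F8]_2) : 'M[F8]_2 :=
  \matrix_(l, j) \sum_(i < 2) u 0 i * Rmat (v 0 j) i l.
Definition rmulT (T : 'M[F8]_2) (a : F8) : 'M[F8]_2 :=
  \sum_(i < 2) \sum_(j < 2) tens (T i j *: om i) (ract (om j) a).

Definition Wm : 'M[F8]_2 :=
  \matrix_(i, j) if i == i0 then (if j == i0 then yA else 1)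
                            else (if j == i0 then 1 else 1 + yA).
Definition wedgeT (T : 'M[F8]_2) : F8 := \sum_(i < 2) \sum_(j < 2) T i j * Wm i j.
Definition wedge (u v : 'rV[F8]_2) : F8 := wedgeT (tens u v).
(* d on Omega^1 (d omega^i = 0):  d(sum a_i omega^i) = sum da_i /\ omega^i *)
Definition dO (v : 'rV[F8]_2) : F8 := \sum_(i < 2) wedge (dA (v 0 i)) (om i).

Definition g0 : 'M[F8]_2 :=
  \matrix_(i, j) if i == i0 then (if j == i0 then yA * yA else 1)
                            else (if j == i0 then 1 else 1 + yA).

(* a bimodule map ( , ) : Omega^1 (x) Omega^1 -> A, given by P i j = (omega^i, omega^j) *)
Definition pair (P : 'M[F8]_2) (T : 'M[F8]_2) : F8 := \sum_(i < 2) \sum_(j < 2) T i j * P i j.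

Definition inv_pairing (g P : 'M[F8]_2) : bool :=
  [forall T : 'M[F8]_2, forall a : F8, pair P (rmulT T a) == pair P T * a] &&
  [forall eta : 'rV[F8]_2,
     (\sum_(p < 2) \sum_(q < 2) pair P (tens eta (g p q *: om p)) *: om q == eta) &&
     (\sum_(p < 2) \sum_(q < 2) ract (g p q *: om p) (pair P (tens (om q) eta)) == eta)].

(* A left connection is determined by Gam i = nabla omega^i. *)
Definition nabla (Gam : {ffun 'I_2 -> 'M[F8]_2}) (v : 'rV[F8]_2) : 'M[F8]_2 :=
  \sum_(i < 2) (v 0 i *: Gam i + tens (dA (v 0 i)) (om i)).

Definition sig (s : {ffun 'I_2 * 'I_2 -> 'M[F8]_2}) (T : 'M[F8]_2) : 'M[F8]_2 :=
  \sum_(i < 2) \sum_(j < 2) T i j *: s (i, j).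

Definition bimod_sig (s : {ffun 'I_2 * 'I_2 -> 'M[F8]_2}) : bool :=
  [forall T : 'M[F8]_2, forall a : F8, sig s (rmulT T a) == rmulT (sig s T) a].

Definition right_leibniz Gam s : bool :=
  [forall v : 'rV[F8]_2, forall a : F8,
     nabla Gam (ract v a) == rmulT (nabla Gam v) a + sig s (tens v (dA a))].

Definition torsion_free Gam : bool :=
  [forall v : 'rV[F8]_2, wedgeT (nabla Gam v) == dO v].

(* (nabla (x) id) g + (sigma (x) id)(id (x) nabla) g = 0 ; an element of
   Omega^1 (x) Omega^1 (x) Omega^1 is written sum_c M_c (x) omega^c. *)
Definition metric_compatible (g : 'M[F8]_2) Gam s : bool :=
  [forall c : 'I_2,
     \sum_(p < 2) nabla Gam (g p c *: om p)
   + \sum_(p < 2) \sum_(q < 2) \sum_(k < 2) sig s (tens (g p q *: om p) (Gam q k c *: om k))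
   == 0].

Definition QLC (g : 'M[F8]_2) (Gam : {ffun 'I_2 -> 'M[F8]_2}) : bool :=
  [exists s, [&& bimod_sig s, right_leibniz Gam s, torsion_free Gam
              & metric_compatible g Gam s]].

(* R(v) in Omega^2 (x) Omega^1, written as the coefficients of Vol (x) omega^l *)
Definition curv Gam (v : 'rV[F8]_2) : 'rV[F8]_2 :=
  let N := nabla Gam v in
  \sum_(i < 2) \sum_(j < 2)
     (dO (N i j *: om i) *: om j
      - \sum_(k < 2) \sum_(l < 2) wedge (N i j *: om i) (Gam j k l *: om k) *: om l).

Definition flat Gam : bool := [forall v : 'rV[F8]_2, curv Gam v == 0].

(* a bimodule map i : Omega^2 -> Omega^1 (x) Omega^1 is determined by t = i(Vol) *)
Definition is_lift (t : 'M[F8]_2) : bool :=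
  [forall a : F8, rmulT t a == a *: t] && (wedgeT t == 1).

Definition Ricci (g P t : 'M[F8]_2) Gam : 'M[F8]_2 :=
  \matrix_(n, l) \sum_(p < 2) \sum_(q < 2) \sum_(m < 2)
     pair P (tens (ract (g p q *: om p) (curv Gam (om q) 0 l)) (t m n *: om m)).

Definition Scal (g P t : 'M[F8]_2) Gam : F8 := pair P (Ricci g P t Gam).

From HB Require Import structures.
From mathcomp Require Import all_boot all_order all_algebra.
From mathcomp Require Import ring.
Import GRing.Theory.
Local Open Scope ring_scope.
Set Implicit Arguments. Unset Strict Implicit. Unset Printing Implicit Defensive.

(** Everything in sight is finite, so the theorem is decided by evaluation once
    the search space is small.  A QLC is determined by its left connection,
    [Gam i = nabla om^i]: the right Leibniz rule evaluated on [om^i (x) dx_j],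
    where [dx = om^1] and [dy = om^2], forces the braiding [sigma], and torsion
    freeness forces [wedge (Gam i) = 0], leaving three free coefficients in each
    [Gam i], hence [8^6] candidates.  All conditions of the definitions are
    transported to coordinates over [F_8] (linearity reduces the bimodule
    property of [sigma] to a basis); the candidates are filtered by metric
    compatibility, and the resulting connections, the lifts and the unique inverse
    pairing are checked by evaluation.  A flat connection has [Ricci = 0] for every
    lift because the Ricci tensor is linear in the curvature. *)

(** * Structure of the calculus *)

Lemma ord2_cases (i : 'I_2) : i = i0 \/ i = i1.
Proof. by case: i => [[|[|//]] Hi]; [left | right]; apply: val_inj. Qed.

Lemma sum2 (V : nmodType) (F : 'I_2 -> V) : \sum_(i < 2) F i = F i0 + F i1.
Proof. by rewrite big_ord_recr big_ord1 /=; congr (F _ + F _); apply: val_inj. Qed.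

Lemma forall_I2 (P : pred 'I_2) : [forall i, P i] = P i0 && P i1.
Proof.
apply/forallP/andP => [H | [H0 H1] i]; first by split; apply: H.
by case: (ord2_cases i) => ->.
Qed.

Lemma forall_I2x2 (P : pred ('I_2 * 'I_2)) :
  [forall ij, P ij] = [&& P (i0, i0), P (i0, i1), P (i1, i0) & P (i1, i1)].
Proof.
apply/forallP/and4P => [H | [H00 H01 H10 H11] [i j]]; first by split; apply: H.
by case: (ord2_cases i) => ->; case: (ord2_cases j) => ->.
Qed.

Lemma om_entry i k : om i 0 k = (k == i)%:R.
Proof. by rewrite mxE eqxx. Qed.

Lemma dA_nat (b : bool) : dA b%:R = 0.
Proof. by case: b; rewrite /dA /= !scale0r addr0. Qed.

Lemma tens_is_linear v : linear (tens ^~ v).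
Proof. by move=> c u w; apply/matrixP => l j; rewrite !mxE !sum2 !mxE; ring. Qed.

Lemma tens0 v : tens 0 v = 0.
Proof. by apply/matrixP => l j; rewrite !mxE sum2 !mxE !mul0r addr0. Qed.

Lemma tensZl c u v : tens (c *: u) v = c *: tens u v.
Proof. by rewrite -[c *: u]addr0 tens_is_linear tens0 addr0. Qed.

Lemma tens_suml (I : Type) (r : seq I) (F : I -> 'rV[F8]_2) v :
  tens (\sum_(i <- r) F i) v = \sum_(i <- r) tens (F i) v.
Proof.
apply: (big_morph (tens ^~ v)); last exact: tens0.
by move=> u w /=; rewrite -{1}[u]scale1r tens_is_linear scale1r.
Qed.

Lemma sig_is_linear s : linear (sig s).
Proof.
move=> c T U; rewrite /sig scaler_sumr -big_split; apply: eq_bigr => i _.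
by rewrite scaler_sumr -big_split; apply: eq_bigr => j _; rewrite !mxE scalerDl scalerA.
Qed.
HB.instance Definition _ s :=
  GRing.isLinear.Build F8 'M[F8]_2 'M[F8]_2 *:%R (sig s) (sig_is_linear s).

Lemma sig_delta s i j : sig s (delta_mx i j) = s (i, j).
Proof.
rewrite /sig !sum2 !mxE.
by case: (ord2_cases i) => ->; case: (ord2_cases j) => -> /=;
  rewrite !scale0r ?scale1r ?addr0 ?add0r.
Qed.

Lemma sig_comp s s' T : sig s (sig s' T) = sig [ffun ij => sig s (s' ij)] T.
Proof.
rewrite {2}/sig linear_sum; apply: eq_bigr => i _.
by rewrite linear_sum; apply: eq_bigr => j _; rewrite linearZ ffunE.
Qed.

Definition rmul_coef (a : F8) : {ffun 'I_2 * 'I_2 -> 'M[F8]_2} :=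
  [ffun ij => tens (om ij.1) (ract (om ij.2) a)].

Lemma rmulT_sig T a : rmulT T a = sig (rmul_coef a) T.
Proof.
rewrite /rmulT /sig; apply: eq_bigr => i _; apply: eq_bigr => j _.
by rewrite tensZl ffunE.
Qed.

Lemma bimod_sig_coef s :
  bimod_sig s = [forall a, [forall ij, sig s (rmul_coef a ij) == rmulT (s ij) a]].
Proof.
apply/forallP/forallP => [bs a | coef T]; apply/forallP.
  move=> [i j]; have /forallP/(_ a)/eqP := bs (delta_mx i j).
  by rewrite rmulT_sig !sig_delta => ->.
move=> a; rewrite !rmulT_sig !sig_comp; apply/eqP; congr (sig _ T); apply/ffunP => ij.
by have /forallP/(_ ij)/eqP := coef a; rewrite !ffunE rmulT_sig.
Qed.

Lemma nabla_om Gam i : nabla Gam (om i) = Gam i.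
Proof.
rewrite /nabla sum2 !om_entry !dA_nat !tens0 !addr0.
by case: (ord2_cases i) => -> /=; rewrite scale1r scale0r ?addr0 ?add0r.
Qed.

Lemma dO_om i : dO (om i) = 0.
Proof. by rewrite /dO /wedge sum2 !om_entry !dA_nat !tens0 /wedgeT !sum2 !mxE !mul0r !addr0. Qed.

Lemma torsion_free_wedge Gam i : torsion_free Gam -> wedgeT (Gam i) = 0.
Proof. by move=> /forallP/(_ (om i))/eqP; rewrite nabla_om dO_om. Qed.

Lemma ricci_flat g P t Gam : flat Gam -> Ricci g P t Gam = 0.
Proof.
move=> /forallP flat0; apply/matrixP => n l; rewrite !mxE.
apply: big1 => p _; apply: big1 => q _; apply: big1 => m _.
have Rmat0 : Rmat 0 = 0 by rewrite /Rmat /= !scale0r !addr0.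
rewrite (eqP (flat0 (om q))) mxE /ract Rmat0 mulmx0 tens0.
by rewrite /pair !sum2 !mxE !mul0r !addr0.
Qed.

Lemma metric_compatibleE g Gam s :
  metric_compatible g Gam s =
  [forall c, \sum_(p < 2) nabla Gam (g p c *: om p)
             + sig s (\sum_(q < 2) \sum_(k < 2)
                        tens (\sum_(p < 2) g p q *: om p) (Gam q k c *: om k)) == 0].
Proof.
apply: eq_forallb => c; congr (_ + _ == 0).
rewrite linear_sum exchange_big; apply: eq_bigr => q _.
rewrite linear_sum exchange_big; apply: eq_bigr => k _.
by rewrite tens_suml linear_sum.
Qed.

(** * Coordinates *)

Lemma addF8 (a : F8) : a + a = 0.
Proof. by case: a => [[] [] []]. Qed.

Definition allF8 : seq F8 :=
  [:: mkF8 false false false; mkF8 true false false; mkF8 false true false; mkF8 true true false;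
      mkF8 false false true; mkF8 true false true; mkF8 false true true; mkF8 true true true].

Lemma mem_allF8 a : a \in allF8.
Proof. by case: a => [[] [] []]. Qed.

(** [case8 h] is extensionally [h], but its normal form is a lookup table; the
    arithmetic of the coordinate computations is tabulated this way for speed. *)
Definition case8 (T : Type) (h : F8 -> T) (a : F8) : T :=
  let: mkF8 a0 a1 a2 := a in
  if a0 then if a1 then if a2 then h (mkF8 true true true) else h (mkF8 true true false)
                   else if a2 then h (mkF8 true false true) else h (mkF8 true false false)
        else if a1 then if a2 then h (mkF8 false true true) else h (mkF8 false true false)
                   else if a2 then h (mkF8 false false true) else h (mkF8 false false false).

Definition fadd : F8 -> F8 -> F8 := Eval vm_compute in case8 (fun a => case8 (fun b => a + b)).
Definition fmul : F8 -> F8 -> F8 := Eval vm_compute in case8 (fun a => case8 (fun b => a * b)).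
Definition feq : F8 -> F8 -> bool := Eval vm_compute in case8 (fun a => case8 (fun b => a == b)).

Lemma faddE a b : fadd a b = a + b.
Proof. by case: a => [[] [] []]; case: b => [[] [] []]. Qed.
Lemma fmulE a b : fmul a b = a * b.
Proof. by case: a => [[] [] []]; case: b => [[] [] []]. Qed.
Lemma feqP a b : reflect (a = b) (feq a b).
Proof. by case: a => [[] [] []]; case: b => [[] [] []]; constructor. Qed.
Lemma feqE a b : feq a b = (a == b).
Proof. by apply/feqP/eqP. Qed.

(** [Vec a b] stands for [a om^1 + b om^2] and [Mat a b c d] for
    [a om^1 (x) om^1 + b om^1 (x) om^2 + c om^2 (x) om^1 + d om^2 (x) om^2]. *)
Record vec := Vec { vx : F8; vy : F8 }.
Record mat := Mat { mxx : F8; mxy : F8; myx : F8; myy : F8 }.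

Definition vec_eqb (u v : vec) := feq (vx u) (vx v) && feq (vy u) (vy v).
Definition mat_eqb (m n : mat) :=
  [&& feq (mxx m) (mxx n), feq (mxy m) (mxy n), feq (myx m) (myx n) & feq (myy m) (myy n)].

Lemma vec_eqbP : Equality.axiom vec_eqb.
Proof.
move=> [a b] [a' b']; rewrite /vec_eqb /=.
apply: (iffP andP) => [[/feqP-> /feqP->] // | [-> ->]].
by split; apply/feqP.
Qed.
HB.instance Definition _ := hasDecEq.Build vec vec_eqbP.

Lemma mat_eqbP : Equality.axiom mat_eqb.
Proof.
move=> [a b c d] [a' b' c' d']; rewrite /mat_eqb /=.
apply: (iffP and4P) => [[/feqP-> /feqP-> /feqP-> /feqP->] // | [-> -> -> ->]].
by split; apply/feqP.
Qed.
HB.instance Definition _ := hasDecEq.Build mat mat_eqbP.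

Definition rv (v : vec) : 'rV[F8]_2 := \row_j if j == i0 then vx v else vy v.
Definition mx (m : mat) : 'M[F8]_2 :=
  \matrix_(i, j) if i == i0 then (if j == i0 then mxx m else mxy m)
                            else (if j == i0 then myx m else myy m).

Lemma rv_x v : rv v 0 i0 = vx v. Proof. by rewrite mxE. Qed.
Lemma rv_y v : rv v 0 i1 = vy v. Proof. by rewrite mxE. Qed.
Lemma mx_xx m : mx m i0 i0 = mxx m. Proof. by rewrite mxE. Qed.
Lemma mx_xy m : mx m i0 i1 = mxy m. Proof. by rewrite mxE. Qed.
Lemma mx_yx m : mx m i1 i0 = myx m. Proof. by rewrite mxE. Qed.
Lemma mx_yy m : mx m i1 i1 = myy m. Proof. by rewrite mxE. Qed.
Definition coordE := (rv_x, rv_y, mx_xx, mx_xy, mx_yx, mx_yy).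

Lemma rvP (u v : 'rV[F8]_2) : u 0 i0 = v 0 i0 -> u 0 i1 = v 0 i1 -> u = v.
Proof. by move=> Ex Ey; apply/rowP => j; case: (ord2_cases j) => ->. Qed.

Lemma mxP (M N : 'M[F8]_2) :
  M i0 i0 = N i0 i0 -> M i0 i1 = N i0 i1 -> M i1 i0 = N i1 i0 -> M i1 i1 = N i1 i1 -> M = N.
Proof.
move=> Exx Exy Eyx Eyy; apply/matrixP => i j.
by case: (ord2_cases i) => ->; case: (ord2_cases j) => ->.
Qed.

Definition vec_of (v : 'rV[F8]_2) := Vec (v 0 i0) (v 0 i1).
Definition mat_of (M : 'M[F8]_2) := Mat (M i0 i0) (M i0 i1) (M i1 i0) (M i1 i1).

Lemma vec_ofK : cancel vec_of rv.
Proof. by move=> v; apply: rvP; rewrite coordE. Qed.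
Lemma mat_ofK : cancel mat_of mx.
Proof. by move=> M; apply: mxP; rewrite coordE. Qed.
Lemma rvK : cancel rv vec_of.
Proof. by case=> a b; rewrite /vec_of !coordE. Qed.
Lemma mxK : cancel mx mat_of.
Proof. by case=> a b c d; rewrite /mat_of !coordE. Qed.

Lemma rv_inj : injective rv. Proof. exact: can_inj rvK. Qed.
Lemma mx_inj : injective mx. Proof. exact: can_inj mxK. Qed.
Lemma eq_rv u v : (rv u == rv v) = (u == v). Proof. by apply/eqP/eqP => [/rv_inj | ->]. Qed.
Lemma eq_mx m n : (mx m == mx n) = (m == n). Proof. by apply/eqP/eqP => [/mx_inj | ->]. Qed.

Definition vzero := Vec 0 0.
Definition mzero := Mat 0 0 0 0.
Definition vadd u v := Vec (fadd (vx u) (vx v)) (fadd (vy u) (vy v)).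
Definition vscale c v := Vec (fmul c (vx v)) (fmul c (vy v)).
Definition madd m n :=
  Mat (fadd (mxx m) (mxx n)) (fadd (mxy m) (mxy n)) (fadd (myx m) (myx n)) (fadd (myy m) (myy n)).
Definition mscale c m :=
  Mat (fmul c (mxx m)) (fmul c (mxy m)) (fmul c (myx m)) (fmul c (myy m)).
Definition vmul v m :=
  Vec (fadd (fmul (vx v) (mxx m)) (fmul (vy v) (myx m)))
      (fadd (fmul (vx v) (mxy m)) (fmul (vy v) (myy m))).

Lemma rv0 : 0 = rv vzero. Proof. by apply: rvP; rewrite coordE mxE. Qed.
Lemma mx0 : 0 = mx mzero. Proof. by apply: mxP; rewrite coordE mxE. Qed.
Lemma rv_add u v : rv u + rv v = rv (vadd u v).
Proof. by apply: rvP; rewrite !(coordE, mxE) /= faddE. Qed.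
Lemma rv_scale c v : c *: rv v = rv (vscale c v).
Proof. by apply: rvP; rewrite !(coordE, mxE) /= fmulE. Qed.
Lemma mx_add m n : mx m + mx n = mx (madd m n).
Proof. by apply: mxP; rewrite !(coordE, mxE) /= faddE. Qed.
Lemma mx_scale c m : c *: mx m = mx (mscale c m).
Proof. by apply: mxP; rewrite !(coordE, mxE) /= fmulE. Qed.
Lemma rv_mul v m : rv v *m mx m = rv (vmul v m).
Proof. by apply: rvP; rewrite !(coordE, mxE) sum2 !(coordE, mxE) /= faddE !fmulE. Qed.
Lemma rv_opp v : - rv v = rv v. Proof. by apply: rvP; rewrite !mxE. Qed.
Lemma mx_opp m : - mx m = mx m. Proof. by apply: mxP; rewrite !mxE. Qed.

Definition allF8sq : seq (F8 * F8) := [seq (a, b) | a <- allF8, b <- allF8].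
Definition allvec : seq vec := [seq Vec a b | a <- allF8, b <- allF8].
Definition allmat : seq mat := [seq Mat u.1 u.2 v.1 v.2 | u <- allF8sq, v <- allF8sq].

Lemma mem_allvec v : v \in allvec.
Proof. by case: v => a b; apply: allpairs_f; apply: mem_allF8. Qed.
Lemma mem_allmat m : m \in allmat.
Proof.
case: m => a b c d; apply: (@allpairs_f _ _ _ _ _ _ (a, b) (c, d));
  by apply: allpairs_f; apply: mem_allF8.
Qed.

Lemma forall_F8 (P : pred F8) : [forall a, P a] = all P allF8.
Proof. by apply/forallP/allP => [H a _ | H a]; [apply: H | apply: H; apply: mem_allF8]. Qed.
Lemma forall_rv (P : pred 'rV[F8]_2) : [forall v, P v] = all (P \o rv) allvec.
Proof.
apply/forallP/allP => [H v _ | H v]; first exact: H.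
by rewrite -(vec_ofK v); apply: H; apply: mem_allvec.
Qed.
Lemma forall_mx (P : pred 'M[F8]_2) : [forall M, P M] = all (P \o mx) allmat.
Proof.
apply/forallP/allP => [H m _ | H M]; first exact: H.
by rewrite -(mat_ofK M); apply: H; apply: mem_allmat.
Qed.
Lemma exists_mx (P : pred 'M[F8]_2) : [exists M, P M] = has (P \o mx) allmat.
Proof.
apply/existsP/hasP => [[M HM] | [m _ Hm]]; last by exists (mx m).
by exists (mat_of M); rewrite ?mem_allmat //= mat_ofK.
Qed.

(** * The calculus in coordinates *)

Definition wx := Vec 1 0.
Definition wy := Vec 0 1.

Lemma om_x : om i0 = rv wx. Proof. by apply: rvP; rewrite !(coordE, mxE). Qed.
Lemma om_y : om i1 = rv wy. Proof. by apply: rvP; rewrite !(coordE, mxE). Qed.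

Lemma rv_coord (a b : F8) : a *: rv wx + b *: rv wy = rv (Vec a b).
Proof. by apply: rvP; rewrite !(coordE, mxE) /= !mulr1 !mulr0 ?addr0 ?add0r. Qed.

Definition cRmat0 (a : F8) : mat :=
  madd (madd (mscale (bF (f0 a)) (Mat 1 0 0 1)) (mscale (bF (f1 a)) (Mat 1 xA 1 yA)))
       (mscale (bF (f2 a)) (Mat (1 + xA) 1 (1 + yA) 0)).
Definition cRmat : F8 -> mat := Eval vm_compute in case8 cRmat0.

Lemma RmatE a : Rmat a = mx (cRmat a).
Proof.
have -> : cRmat a = cRmat0 a by case: a => [[] [] []].
rewrite /Rmat.
have -> : 1%:M = mx (Mat 1 0 0 1) by apply: mxP; rewrite !(coordE, mxE).
have -> : Ry = mx (Mat 1 xA 1 yA) by apply: mxP; rewrite !(coordE, mxE).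
have -> : Rx = mx (Mat (1 + xA) 1 (1 + yA) 0) by apply: mxP; rewrite !(coordE, mxE).
by rewrite !mx_scale !mx_add.
Qed.

Definition cract v a := vmul v (cRmat a).
Lemma ractE v a : ract (rv v) a = rv (cract v a).
Proof. by rewrite /ract RmatE rv_mul. Qed.

Definition cdA0 (a : F8) := vadd (vscale (bF (f2 a)) wx) (vscale (bF (f1 a)) wy).
Definition cdA : F8 -> vec := Eval vm_compute in case8 cdA0.
Lemma dAE a : dA a = rv (cdA a).
Proof.
have -> : cdA a = cdA0 a by case: a => [[] [] []].
by rewrite /dA om_x om_y !rv_scale rv_add.
Qed.

Definition ctens u v :=
  let cx := cract u (vx v) in let cy := cract u (vy v) in Mat (vx cx) (vx cy) (vy cx) (vy cy).
Lemma tensE u v : tens (rv u) (rv v) = mx (ctens u v).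
Proof.
have entry l j : tens (rv u) (rv v) l j = (rv u *m Rmat (rv v 0 j)) 0 l by rewrite !mxE.
by apply: mxP; rewrite !entry !coordE !RmatE !rv_mul !coordE.
Qed.

Lemma tens_om i j : tens (om i) (om j) = delta_mx i j.
Proof.
case: (ord2_cases i) => ->; case: (ord2_cases j) => ->;
  by rewrite ?om_x ?om_y tensE; apply: mxP; rewrite !(coordE, mxE).
Qed.

Record bimap := Bimap { sxx : mat; sxy : mat; syx : mat; syy : mat }.
Definition sigm (S : bimap) : {ffun 'I_2 * 'I_2 -> 'M[F8]_2} :=
  [ffun ij => mx (if ij.1 == i0 then (if ij.2 == i0 then sxx S else sxy S)
                                else (if ij.2 == i0 then syx S else syy S))].

Definition csig S T :=
  madd (madd (mscale (mxx T) (sxx S)) (mscale (mxy T) (sxy S)))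
       (madd (mscale (myx T) (syx S)) (mscale (myy T) (syy S))).
Lemma sigE S T : sig (sigm S) (mx T) = mx (csig S T).
Proof. by rewrite /sig !sum2 !ffunE /= !coordE !mx_scale !mx_add. Qed.

Definition cRT0 a :=
  Bimap (ctens wx (cract wx a)) (ctens wx (cract wy a))
        (ctens wy (cract wx a)) (ctens wy (cract wy a)).
Definition cRT : F8 -> bimap := Eval vm_compute in case8 cRT0.

Lemma rmul_coefE a : rmul_coef a = sigm (cRT a).
Proof.
have -> : cRT a = cRT0 a by case: a => [[] [] []].
apply/ffunP => -[i j]; rewrite !ffunE /=.
by case: (ord2_cases i) => ->; case: (ord2_cases j) => -> /=; rewrite ?om_x ?om_y ractE tensE.
Qed.

Definition crmulT T a := csig (cRT a) T.
Lemma rmulTE T a : rmulT (mx T) a = mx (crmulT T a).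
Proof. by rewrite rmulT_sig rmul_coefE sigE. Qed.

Definition cpair P T :=
  fadd (fadd (fmul (mxx T) (mxx P)) (fmul (mxy T) (mxy P)))
       (fadd (fmul (myx T) (myx P)) (fmul (myy T) (myy P))).
Lemma pairE P T : pair (mx P) (mx T) = cpair P T.
Proof. by rewrite /pair !sum2 !coordE /cpair !faddE !fmulE. Qed.

Definition cWm := Mat yA 1 1 (1 + yA).
Lemma wedgeTE T : wedgeT (mx T) = cpair cWm T.
Proof.
rewrite /wedgeT; have -> : Wm = mx cWm by apply: mxP; rewrite !(coordE, mxE).
exact: pairE.
Qed.

Definition cdO v := fadd (cpair cWm (ctens (cdA (vx v)) wx)) (cpair cWm (ctens (cdA (vy v)) wy)).
Lemma dOE v : dO (rv v) = cdO v.
Proof. by rewrite /dO /wedge sum2 !coordE !dAE om_x om_y !tensE !wedgeTE -faddE. Qed.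

Definition conn := (mat * mat)%type.
Definition gam (G : conn) : {ffun 'I_2 -> 'M[F8]_2} :=
  [ffun i => mx (if i == i0 then G.1 else G.2)].
Lemma gam_x G : gam G i0 = mx G.1. Proof. by rewrite ffunE. Qed.
Lemma gam_y G : gam G i1 = mx G.2. Proof. by rewrite ffunE. Qed.

Definition conn_of (Gam : {ffun 'I_2 -> 'M[F8]_2}) : conn := (mat_of (Gam i0), mat_of (Gam i1)).
Lemma conn_ofK : cancel conn_of gam.
Proof. by move=> Gam; apply/ffunP => i; case: (ord2_cases i) => ->; rewrite ffunE mat_ofK. Qed.
Lemma gamK : cancel gam conn_of.
Proof. by case=> m n; rewrite /conn_of gam_x gam_y !mxK. Qed.
Lemma gam_inj : injective gam. Proof. exact: can_inj gamK. Qed.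

Definition cnabla0 v := madd (ctens (cdA (vx v)) wx) (ctens (cdA (vy v)) wy).
Definition cnabla (G : conn) v := madd (madd (mscale (vx v) G.1) (mscale (vy v) G.2)) (cnabla0 v).
Lemma nablaE G v : nabla (gam G) (rv v) = mx (cnabla G v).
Proof.
rewrite /nabla sum2 !coordE gam_x gam_y !dAE om_x om_y !tensE !mx_scale.
by rewrite addrACA !mx_add.
Qed.

Definition coord (j : 'I_2) : F8 := if j == i0 then xA else yA.
Lemma dA_coord j : dA (coord j) = om j.
Proof. by case: (ord2_cases j) => ->; rewrite dAE ?om_x ?om_y. Qed.

Definition sigma_of (Gam : {ffun 'I_2 -> 'M[F8]_2}) : {ffun 'I_2 * 'I_2 -> 'M[F8]_2} :=
  [ffun ij => nabla Gam (ract (om ij.1) (coord ij.2)) - rmulT (Gam ij.1) (coord ij.2)].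

Lemma right_leibniz_sigma Gam s : right_leibniz Gam s -> s = sigma_of Gam.
Proof.
move=> /forallP rl; apply/ffunP => -[i j]; rewrite ffunE /=.
have /forallP/(_ (coord j))/eqP -> := rl (om i).
by rewrite dA_coord tens_om sig_delta nabla_om addrAC subrr add0r.
Qed.

Lemma QLC_sigma_of g Gam :
  QLC g Gam = [&& bimod_sig (sigma_of Gam), right_leibniz Gam (sigma_of Gam),
                  torsion_free Gam & metric_compatible g Gam (sigma_of Gam)].
Proof.
apply/existsP/idP => [[s /and4P[bs rl tf mc]] | QL]; last by exists (sigma_of Gam).
by move: (right_leibniz_sigma rl) => E; subst s; apply/and4P.
Qed.

(** Global constants are evaluated only once by the VM. *)
Definition sigma_part (e : vec) (a : F8) := let v := cract e a in (v, cnabla0 v).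
Definition sigma_xx := sigma_part wx xA.
Definition sigma_xy := sigma_part wx yA.
Definition sigma_yx := sigma_part wy xA.
Definition sigma_yy := sigma_part wy yA.

Definition sigma_entry (G : conn) (vK : vec * mat) (Gi : mat) (a : F8) :=
  madd (madd (madd (mscale (vx vK.1) G.1) (mscale (vy vK.1) G.2)) vK.2) (crmulT Gi a).
Definition csigma (G : conn) : bimap :=
  Bimap (sigma_entry G sigma_xx G.1 xA) (sigma_entry G sigma_xy G.1 yA)
        (sigma_entry G sigma_yx G.2 xA) (sigma_entry G sigma_yy G.2 yA).

Lemma sigma_ofE G : sigma_of (gam G) = sigm (csigma G).
Proof.
apply/ffunP => -[i j]; rewrite !ffunE /coord /=.
by case: (ord2_cases i) => ->; case: (ord2_cases j) => -> /=;
  rewrite ?om_x ?om_y ?gam_x ?gam_y ractE nablaE rmulTE mx_opp mx_add.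
Qed.

Definition tf_mat (a c d : F8) := Mat a (fadd (fadd (fmul a yA) c) (fmul d (fadd 1 yA))) c d.

Lemma wedgeT_eq0 M : wedgeT M = 0 -> mat_of M = tf_mat (M i0 i0) (M i1 i0) (M i1 i1).
Proof.
rewrite -[M in wedgeT M]mat_ofK wedgeTE /cpair /tf_mat /= !faddE !fmulE => E; congr Mat.
by apply: (addIr (M i0 i1)); rewrite addF8 -E; ring.
Qed.

Definition mcol (m : mat) (b : bool) : vec :=
  if b then Vec (mxx m) (myx m) else Vec (mxy m) (myy m).

Definition cmetric_col (g : mat) (G : conn) (S : bimap) (b : bool) : mat :=
  let gc := mcol g b in let y1 := mcol G.1 b in let y2 := mcol G.2 b in
  let gx := mcol g true in let gy := mcol g false in
  madd (madd (cnabla G (vscale (vx gc) wx)) (cnabla G (vscale (vy gc) wy)))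
       (csig S (madd (madd (ctens gx (vscale (vx y1) wx)) (ctens gx (vscale (vy y1) wy)))
                     (madd (ctens gy (vscale (vx y2) wx)) (ctens gy (vscale (vy y2) wy))))).
(* [if] rather than [&&]: the VM evaluates both arguments of [andb]. *)
Definition cmetric g G S :=
  if cmetric_col g G S true == mzero then cmetric_col g G S false == mzero else false.

Lemma metricE g G S : metric_compatible (mx g) (gam G) (sigm S) = cmetric g G S.
Proof.
(* Locked, these constants cannot be unfolded by [rewrite] while it matches sums. *)
rewrite metric_compatibleE forall_I2 [nabla]lock [sig]lock [tens]lock !sum2 -!lock.
rewrite gam_x gam_y !coordE om_x om_y !rv_coord !rv_scale !nablaE !tensE.
by rewrite !mx_add !sigE !mx_add mx0 !eq_mx.
Qed.

Definition crl G S :=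
  all (fun v => all (fun a =>
    cnabla G (cract v a) == madd (crmulT (cnabla G v) a) (csig S (ctens v (cdA a)))) allF8) allvec.
Lemma right_leibnizE G S : right_leibniz (gam G) (sigm S) = crl G S.
Proof.
rewrite /right_leibniz /crl forall_rv; apply: eq_all => v; rewrite [LHS]/= forall_F8.
by apply: eq_all => a; rewrite ractE !nablaE rmulTE dAE tensE sigE mx_add eq_mx.
Qed.

Definition cbimod S :=
  all (fun a => let R := cRT a in
    [&& csig S (sxx R) == crmulT (sxx S) a, csig S (sxy R) == crmulT (sxy S) a,
        csig S (syx R) == crmulT (syx S) a & csig S (syy R) == crmulT (syy S) a]) allF8.
Lemma bimod_sigE S : bimod_sig (sigm S) = cbimod S.
Proof.
rewrite bimod_sig_coef /cbimod forall_F8; apply: eq_all => a.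
by rewrite [LHS]/= forall_I2x2 rmul_coefE !ffunE /= !sigE !rmulTE !eq_mx.
Qed.

Definition ctf G := all (fun v => feq (cpair cWm (cnabla G v)) (cdO v)) allvec.
Lemma torsion_freeE G : torsion_free (gam G) = ctf G.
Proof.
rewrite /torsion_free /ctf forall_rv; apply: eq_all => v.
by rewrite [LHS]/= nablaE wedgeTE dOE feqE.
Qed.

Definition cqlc g G :=
  let S := csigma G in if cmetric g G S then [&& ctf G, crl G S & cbimod S] else false.
Lemma QLCE g G : QLC (mx g) (gam G) = cqlc g G.
Proof.
rewrite QLC_sigma_of sigma_ofE bimod_sigE right_leibnizE torsion_freeE metricE /cqlc.
by case: (cbimod _); case: (crl _ _); case: (ctf _); case: (cmetric _ _ _).
Qed.

Definition ccurv_term (n : F8) (ei ej : vec) (Gj : mat) : vec :=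
  let u := vscale n ei in
  let w gkl ek el := vscale (cpair cWm (ctens u (vscale gkl ek))) el in
  vadd (vscale (cdO u) ej)
       (vadd (vadd (w (mxx Gj) wx wx) (w (mxy Gj) wx wy))
             (vadd (w (myx Gj) wy wx) (w (myy Gj) wy wy))).
Definition ccurv (G : conn) v :=
  let N := cnabla G v in
  vadd (vadd (ccurv_term (mxx N) wx wx G.1) (ccurv_term (mxy N) wx wy G.2))
       (vadd (ccurv_term (myx N) wy wx G.1) (ccurv_term (myy N) wy wy G.2)).

Lemma curvE G v : curv (gam G) (rv v) = rv (ccurv G v).
Proof.
rewrite /curv nablaE; cbv zeta.
rewrite [dO]lock [wedge]lock !sum2 gam_x gam_y !coordE om_x om_y !rv_scale -!lock.
by rewrite /wedge !tensE !wedgeTE !dOE !rv_add !rv_opp !rv_add.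
Qed.

Definition cflat G := all (fun v => ccurv G v == vzero) allvec.
Lemma flatE G : flat (gam G) = cflat G.
Proof. by rewrite /flat /cflat forall_rv; apply: eq_all => v; rewrite [LHS]/= curvE rv0 eq_rv. Qed.

Definition clift t := all (fun a => crmulT t a == mscale a t) allF8 && feq (cpair cWm t) 1.
Lemma liftE t : is_lift (mx t) = clift t.
Proof.
rewrite /is_lift /clift forall_F8 wedgeTE feqE; congr (_ && _).
by apply: eq_all => a; rewrite /= rmulTE mx_scale eq_mx.
Qed.

Definition vsel (v : vec) (b : bool) := if b then vx v else vy v.

Definition cricci (g P t : mat) (G : conn) : mat :=
  let Rx := ccurv G wx in let Ry := ccurv G wy in
  let e n l :=
    let tn := mcol t n in
    let T gpq ep Rq tmn em := cpair P (ctens (cract (vscale gpq ep) (vsel Rq l)) (vscale tmn em)) in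
    fadd (fadd (fadd (T (mxx g) wx Rx (vx tn) wx) (T (mxx g) wx Rx (vy tn) wy))
               (fadd (T (mxy g) wx Ry (vx tn) wx) (T (mxy g) wx Ry (vy tn) wy)))
         (fadd (fadd (T (myx g) wy Rx (vx tn) wx) (T (myx g) wy Rx (vy tn) wy))
               (fadd (T (myy g) wy Ry (vx tn) wx) (T (myy g) wy Ry (vy tn) wy))) in
  Mat (e true true) (e true false) (e false true) (e false false).

Lemma RicciE g P t G : Ricci (mx g) (mx P) (mx t) (gam G) = mx (cricci g P t G).
Proof.
apply: mxP; rewrite /Ricci !(coordE, mxE) [pair]lock [tens]lock [ract]lock [curv]lock;
  by rewrite !sum2 -!lock om_x om_y !curvE !coordE !rv_scale !ractE !tensE !pairE -!faddE.
Qed.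

Definition ceinstein g P G t :=
  let R := cricci g P t G in madd R (mscale (cpair P R) g) == mzero.
Lemma einsteinE g P G t :
  (Ricci (mx g) (mx P) (mx t) (gam G) + Scal (mx g) (mx P) (mx t) (gam G) *: mx g == 0)
  = ceinstein g P G t.
Proof. by rewrite /Scal RicciE pairE mx_scale mx_add mx0 eq_mx. Qed.

Definition cinv_left g P w :=
  let T gpq ep eq := vscale (cpair P (ctens w (vscale gpq ep))) eq in
  vadd (vadd (T (mxx g) wx wx) (T (mxy g) wx wy)) (vadd (T (myx g) wy wx) (T (myy g) wy wy)).
Definition cinv_right g P w :=
  let T gpq ep eq := cract (vscale gpq ep) (cpair P (ctens eq w)) in
  vadd (vadd (T (mxx g) wx wx) (T (mxy g) wx wy)) (vadd (T (myx g) wy wx) (T (myy g) wy wy)).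
Definition cinv_on g P w := (cinv_left g P w == w) && (cinv_right g P w == w).
Definition cinv g P :=
  all (fun T => all (fun a => feq (cpair P (crmulT T a)) (fmul (cpair P T) a)) allF8) allmat
  && all (cinv_on g P) allvec.

Lemma inv_pairingE g P : inv_pairing (mx g) (mx P) = cinv g P.
Proof.
rewrite /inv_pairing /cinv forall_mx forall_rv; congr (_ && _).
  apply: eq_all => T; rewrite [LHS]/= forall_F8; apply: eq_all => a.
  by rewrite /= rmulTE !pairE fmulE feqE.
apply: eq_all => w; rewrite [LHS]/= /cinv_on [pair]lock [tens]lock [ract]lock !sum2 -!lock;
  by rewrite !coordE om_x om_y !rv_scale !tensE !pairE !ractE !rv_add !eq_rv.
Qed.

(** * Enumeration of the connections *)

Definition tf_mats : seq mat := [seq tf_mat ac.1 ac.2 d | ac <- allF8sq, d <- allF8].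
Definition candidates : seq conn := [seq (m, n) | m <- tf_mats, n <- tf_mats].

Lemma tf_mat_in a c d : tf_mat a c d \in tf_mats.
Proof.
apply: (@allpairs_f _ _ _ _ _ _ (a, c)); last exact: mem_allF8.
by apply: allpairs_f; apply: mem_allF8.
Qed.

Lemma torsion_free_candidate G : torsion_free (gam G) -> G \in candidates.
Proof.
move=> tf; rewrite -[G]gamK /conn_of.
by apply: allpairs_f; rewrite wedgeT_eq0 ?tf_mat_in // torsion_free_wedge.
Qed.

Lemma uniq_candidates : uniq candidates.
Proof.
have uniq_tf : uniq tf_mats.
  by apply: allpairs_uniq => [||[[a c] d] [[a' c'] d'] _ _ /= [-> _ -> ->]].
by apply: (allpairs_uniq uniq_tf uniq_tf) => -[m n] [m' n'] _ _ [-> ->].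
Qed.

Definition qlcs g : seq conn := [seq G <- candidates | cqlc g G].

Lemma mem_qlcs g G : (G \in qlcs g) = QLC (mx g) (gam G).
Proof.
rewrite mem_filter -QLCE andb_idr // QLC_sigma_of => /and4P[_ _ tf _].
exact: torsion_free_candidate.
Qed.

Lemma card_gam (L : seq conn) (Q : pred {ffun 'I_2 -> 'M[F8]_2}) :
  uniq L -> (forall G, Q (gam G) = (G \in L)) -> #|[set Gam | Q Gam]| = size L.
Proof.
move=> uL QL; have -> : [set Gam | Q Gam] = [set Gam in map gam L].
  by apply/setP => Gam; rewrite !inE -[Gam]conn_ofK QL mem_map //; apply: gam_inj.
by rewrite cardsE -(size_map gam); apply/card_uniqP; rewrite map_inj_uniq //; apply: gam_inj.
Qed.

Lemma has_filter_and (T : Type) (a p : pred T) s :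
  has p (filter a s) = has (fun x => a x && p x) s.
Proof. by elim: s => //= x s IH; case: (a x); rewrite /= IH. Qed.

Definition lifts : seq mat := [seq t <- allmat | clift t].

Definition qlc_census (g : 'M[F8]_2) : Prop :=
  (exists P, inv_pairing g P) /\
  forall P : 'M[F8]_2, inv_pairing g P ->
    [/\ #|[set Gam | QLC g Gam]| = 12%N,
        #|[set Gam | QLC g Gam && flat Gam]| = 5%N,
        (forall Gam, QLC g Gam -> flat Gam ->
           forall t, is_lift t -> Ricci g P t Gam = 0)
      & #|[set Gam | [&& QLC g Gam, ~~ flat Gam &
            [exists t, is_lift t && (Ricci g P t Gam + Scal g P t Gam *: g == 0)]]]| = 1%N].

Definition census g : bool :=
  if [seq P <- allmat | all (cinv_on g P) [:: wx; wy]] is [:: P] then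
    let L := qlcs g in
    [&& cinv g P, size L == 12%N, count cflat L == 5%N
      & count (fun G => ~~ cflat G && has (ceinstein g P G) lifts) L == 1%N]
  else false.

Lemma census_sound g : census g -> qlc_census (mx g).
Proof.
rewrite /census; case E : [seq P <- allmat | _] => [|P0 [|//]] //.
move=> /and4P[inv_P0 /eqP size12 /eqP flat5 /eqP einstein1].
have P0_unique P : inv_pairing (mx g) P -> P = mx P0.
  rewrite -[P]mat_ofK inv_pairingE => /andP[_ /allP on_all].
  have : mat_of P \in [seq P <- allmat | all (cinv_on g P) [:: wx; wy]].
    by rewrite mem_filter mem_allmat /= !on_all ?mem_allvec.
  by rewrite E inE => /eqP ->.
split=> [|P /P0_unique ->]; first by exists (mx P0); rewrite inv_pairingE.
have uniq_qlcs := filter_uniq (cqlc g) uniq_candidates.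
split.
- by apply: eq_trans size12; apply: card_gam => // G; rewrite mem_qlcs.
- rewrite -size_filter in flat5; apply: eq_trans flat5.
  apply: card_gam => [|G]; first exact: filter_uniq.
  by rewrite mem_filter mem_qlcs flatE andbC.
- by move=> Gam _ flat_Gam t _; apply: ricci_flat.
- rewrite -size_filter in einstein1; apply: eq_trans einstein1.
  apply: card_gam => [|G]; first exact: filter_uniq.
  rewrite mem_filter mem_qlcs flatE exists_mx /lifts has_filter_and [RHS]andbC.
  by congr (_ && (_ && _)); apply: eq_has => t; rewrite /= liftE einsteinE.
Qed.

Definition cg0 := Mat (yA * yA) 1 1 (1 + yA).

Lemma g0E : g0 = mx cg0.
Proof. by apply: mxP; rewrite !(coordE, mxE). Qed.

Lemma census_metrics :
  all (fun beta => census (mscale beta cg0)) [:: yA * yA; 1 + yA * yA; 1 + yA].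
Proof. vm_cast_no_check (erefl true). Qed.

Theorem mainTheorem10 :
  forall beta : F8, beta \in [:: yA * yA; 1 + yA * yA; 1 + yA] ->
  let g := beta *: g0 in
  (exists P, inv_pairing g P) /\
  forall P : 'M[F8]_2, inv_pairing g P ->
    [/\ #|[set Gam | QLC g Gam]| = 12%N,
        #|[set Gam | QLC g Gam && flat Gam]| = 5%N,
        (forall Gam, QLC g Gam -> flat Gam ->
           forall t, is_lift t -> Ricci g P t Gam = 0)
      & #|[set Gam | [&& QLC g Gam, ~~ flat Gam &
            [exists t, is_lift t && (Ricci g P t Gam + Scal g P t Gam *: g == 0)]]]| = 1%N].
Proof.
move=> beta beta_in; rewrite g0E mx_scale.
exact: census_sound (allP census_metrics beta beta_in).
Qed.
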